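(* Let $K$ be a field of characteristic zero. Suppose that for all $f,g\in K[X]$ with $\deg(f)=\deg(g)>1$ and all $x_0,y_0\in K$: if infinitely many points of $\mathcal{O}_f(x_0)\times\mathcal{O}_g(y_0)$ lie on the line $Y=X$, then $g^k=f^k$ for some positive integer $k$. Then for all $\alpha,\beta,x_0,y_0\in K$ with $\alpha\neq0$ and all $f,g\in K[X]$ with $\deg(f)=\deg(g)>1$: if infinitely many points of $\mathcal{O}_f(x_0)\times\mathcal{O}_g(y_0)$ lie on the line $Y=\alpha X+\beta$, then $g^k(\alpha X+\beta)=\alpha f^k(X)+\beta$ for some positive integer $k$.
   Context: $\mathcal{O}_f(x_0)=\{x_0,f(x_0),f(f(x_0)),\dots\}$ is the orbit of $x_0$ under $f$; $f^k$ denotes the $k$-th iterate of $f$ under composition. *)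

From mathcomp Require Import all_boot all_algebra.
Set Implicit Arguments. Unset Strict Implicit. Unset Printing Implicit Defensive.
Import GRing.Theory.
Local Open Scope ring_scope.

Definition in_orbit (K : nzRingType) (f : {poly K}) (x0 y : K) : Prop :=
  exists n : nat, y = iter n (fun x => f.[x]) x0.

Definition poly_iter (K : nzRingType) (k : nat) (f : {poly K}) : {poly K} :=
  iter k (fun p => p \Po f) 'X.

Definition infinite_pred (T : eqType) (P : T -> Prop) : Prop :=
  ~ (exists s : seq T, forall x, P x -> x \in s).

Definition inf_on_line (K : nzRingType) (f g : {poly K}) (x0 y0 a b : K) : Prop :=
  infinite_pred (fun p : K * K =>
    [/\ in_orbit f x0 p.1, in_orbit g y0 p.2 & p.2 = a * p.1 + b]).

From Pilot Require Import Defs.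
From mathcomp Require Import all_boot all_algebra.
Import GRing.Theory.
Local Open Scope ring_scope.

Set Implicit Arguments.
Unset Strict Implicit.
Unset Printing Implicit Defensive.

(* Conjugating g by the affine map L(X) = a X + b, i.e. passing to
   g' = L^-1 o g o L, sends the orbit of y0 under g onto the orbit of
   L^-1(y0) under g', and hence the points of O_f(x0) x O_g(y0) on the line
   Y = a X + b onto points of O_f(x0) x O_g'(L^-1 y0) on the diagonal Y = X.
   The hypothesis then gives g'^k = f^k, and g'^k = L^-1 o g^k o L, so
   conjugating back yields g^k o L = L o f^k. *)

Lemma iter_conj (T : Type) (g l m : T -> T) :
  cancel m l -> forall n x, iter n (m \o g \o l) (m x) = m (iter n g x).
Proof. by move=> ml; elim=> [|n IHn] x //=; rewrite IHn /= ml. Qed.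

Lemma infinite_pred_preim (S T : eqType) (P : S -> Prop) (Q : T -> Prop)
    (h : T -> S) :
  (forall x, P x -> exists2 z, Q z & x = h z) ->
  infinite_pred P -> infinite_pred Q.
Proof.
move=> PhQ infP [s sQ]; apply: infP; exists (map h s) => x /PhQ [z Qz ->].
by rewrite map_f // sQ.
Qed.

Section PolyConj.
Variable R : comNzRingType.
Variables l m : {poly R}.
Hypotheses (lm : l \Po m = 'X) (ml : m \Po l = 'X).

Lemma poly_iter_conj (g : {poly R}) (k : nat) :
  poly_iter k (m \Po (g \Po l)) = m \Po (poly_iter k g \Po l).
Proof.
elim: k => [|k IHk] /=; first by rewrite comp_polyX ml.
rewrite -/(poly_iter k _) IHk -!comp_polyA (comp_polyA l) lm comp_polyX.
by rewrite comp_polyA.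
Qed.

Lemma in_orbit_conj (g : {poly R}) (y0 y : R) :
  Defs.in_orbit g y0 y -> Defs.in_orbit (m \Po (g \Po l)) m.[y0] m.[y].
Proof.
have ml_eval x : l.[m.[x]] = x by rewrite -horner_comp lm hornerX.
move=> [n ->]; exists n.
rewrite -(iter_conj (fun x => g.[x]) ml_eval).
by apply: eq_iter => x; rewrite !horner_comp.
Qed.

End PolyConj.

Section Affine.
Variable K : fieldType.

Definition affine (a b : K) : {poly K} := a *: 'X + b%:P.

Lemma horner_affine (a b x : K) : (affine a b).[x] = a * x + b.
Proof. by rewrite hornerD hornerZ hornerX hornerC. Qed.

Lemma affine_comp (a b : K) (p : {poly K}) : affine a b \Po p = a *: p + b%:P.
Proof. by rewrite comp_polyD comp_polyZ comp_polyX comp_polyC. Qed.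

Lemma affine10 : affine 1 0 = 'X.
Proof. by rewrite /affine scale1r addr0. Qed.

Lemma comp_affine (a b c d : K) :
  affine a b \Po affine c d = affine (a * c) (a * d + b).
Proof.
rewrite affine_comp /affine scalerDr scalerA -addrA; congr (_ + _).
by rewrite polyCD -mul_polyC polyCM.
Qed.

Lemma size_affine_comp (a b : K) (p : {poly K}) :
  a != 0 -> (1 < size p)%N -> size (affine a b \Po p) = size p.
Proof.
move=> a0 p1; rewrite affine_comp size_polyDl size_scale //.
exact: leq_ltn_trans (size_polyC_leq1 b) p1.
Qed.

Lemma size_affine (a b : K) : a != 0 -> size (affine a b) = 2%N.
Proof. by move=> a0; rewrite -(comp_polyXr (affine a b)) size_affine_comp ?size_polyX. Qed.

Variables (a b : K).
Hypothesis a0 : a != 0.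

Definition affine_inv : {poly K} := affine a^-1 (- (a^-1 * b)).

Lemma affineK : affine_inv \Po affine a b = 'X.
Proof. by rewrite comp_affine mulVf // addrN affine10. Qed.

Lemma affine_invK : affine a b \Po affine_inv = 'X.
Proof. by rewrite comp_affine mulfV // mulrN mulrA mulfV // mul1r addNr affine10. Qed.

Lemma horner_affine_inv (y : K) : affine_inv.[a * y + b] = y.
Proof. by rewrite -horner_affine -horner_comp affineK hornerX. Qed.

End Affine.

Theorem lemma5p2 (K : fieldType) (char0 : [pchar K] =i pred0)
  (Hdiag : forall (f g : {poly K}) (x0 y0 : K),
      size f = size g -> (2 < size f)%N ->
      inf_on_line f g x0 y0 1 0 ->
      exists k : nat, (0 < k)%N /\ poly_iter k g = poly_iter k f) :
  forall (a b x0 y0 : K) (f g : {poly K}),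
    a != 0 ->
    size f = size g -> (2 < size f)%N ->
    inf_on_line f g x0 y0 a b ->
    exists k : nat, (0 < k)%N /\
      (poly_iter k g) \Po (a *: 'X + b%:P) = a *: poly_iter k f + b%:P.
Proof.
move=> a b x0 y0 f g a0 sfg sf onLine.
have [LM ML] := (affine_invK b a0, affineK b a0).
set L := affine a b in LM ML *; set M := affine_inv a b in LM ML *.
have size_conj : size (M \Po (g \Po L)) = size g.
  rewrite size_affine_comp ?invr_eq0 // size_comp_poly2 ?size_affine //.
  by rewrite -sfg ltnW.
have onDiag : inf_on_line f (M \Po (g \Po L)) x0 M.[y0] 1 0.
  apply: (infinite_pred_preim (h := fun p => (p.1, a * p.2 + b))) onLine.
  move=> [x y] /= [fx gy yE]; rewrite yE in gy *; exists (x, x) => //.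
  split=> //=; last by rewrite mul1r addr0.
  by rewrite -(horner_affine_inv b a0 x); apply: (@in_orbit_conj _ L M LM).
have [k [k0 iterk]] := Hdiag f _ x0 M.[y0] (etrans sfg (esym size_conj)) sf onDiag.
exists k; split=> //.
move: iterk; rewrite (poly_iter_conj LM ML) => /(congr1 (fun p => L \Po p)).
by rewrite comp_polyA LM comp_polyX => ->; rewrite affine_comp.
Qed.
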